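(* Let $\mathcal R$ be a PTRS. If there exists an infinite sequence $(\mu_n)_{n\in\mathbb N}$ with $\mu_n\overset{\mathsf i}{\rightrightarrows}_{\mathcal R}\mu_{n+1}$ for all $n$ and $\lim_{n\to\infty}|\mu_n|_{\mathcal R}<1$, then there also exists an infinite sequence $(\mu'_n)_{n\in\mathbb N}$ with $\mu'_n\overset{\mathsf i}{\rightrightarrows}_{\mathcal R}\mu'_{n+1}$ for all $n$, $\mu'_0=\{1:t\}$ for some term $t$, and $\lim_{n\to\infty}|\mu'_n|_{\mathcal R}<1$.
   Context: Finite multi-distributions on a set $A$: finite multisets of pairs $(p:a)$, $0<p\le1$, with probabilities summing to $1$; $p\cdot\mu=\{(pq:a)\mid(q:a)\in\mu\}$. A PTRS is a finite set of rules $\ell\to\{p_1:r_1,\dots,p_k:r_k\}$ ($\ell$ non-variable, $\mathcal V(r_j)\subseteq\mathcal V(\ell)$). $s\overset{\mathsf i}{\to}_{\mathcal R}\{p_1:t_1,\dots,p_k:t_k\}$ if for a position $\pi$, rule and substitution $\sigma$: $s|_\pi=\ell\sigma$, every proper subterm of $\ell\sigma$ is in $\mathtt{NF}_{\mathcal R}$ (terms admitting no rewrite step), and $t_j=s[r_j\sigma]_\pi$. $\overset{\mathsf i}{\rightrightarrows}_{\mathcal R}$ is its lifting: the smallest relation on finite multi-distributions of terms with $\{1:t\}\rightrightarrows\{1:t\}$ for $t\in\mathtt{NF}_{\mathcal R}$, $\{1:t\}\rightrightarrows\mu$ if $t\overset{\mathsf i}{\to}_{\mathcal R}\mu$, and $\bigcup_jp_j\cdot\mu_j\rightrightarrows\bigcup_jp_j\cdot\nu_j$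 whenever $\mu_j\rightrightarrows\nu_j$, $p_j>0$, $\sum_jp_j=1$. $|\mu|_{\mathcal R}=\sum_{(p:t)\in\mu,\,t\in\mathtt{NF}_{\mathcal R}}p$. *)

From Stdlib Require Import Reals List Permutation ClassicalEpsilon.
Import ListNotations.
Open Scope R_scope.
Set Implicit Arguments.

Section PTRS.
Variables (F V : Type).

Inductive term : Type :=
| Var : V -> term
| Fun : F -> list term -> term.

Fixpoint subst (s : V -> term) (t : term) : term :=
  match t with
  | Var x => s x
  | Fun f ts => Fun f (map (subst s) ts)
  end.

Inductive occurs (x : V) : term -> Prop :=
| occ_var : occurs x (Var x)
| occ_fun f ts u : In u ts -> occurs x u -> occurs x (Fun f ts).

Inductive imm_sub : term -> term -> Prop :=
| imm_sub_in f ts u : In u ts -> imm_sub u (Fun f ts).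
Inductive proper_subterm : term -> term -> Prop :=
| ps_imm u t : imm_sub u t -> proper_subterm u t
| ps_trans u v t : imm_sub u v -> proper_subterm v t -> proper_subterm u t.

(* one-hole contexts; plug C s = C[s]_pi, with pi the position of the hole *)
Inductive ctx : Type :=
| Hole : ctx
| CFun : F -> list term -> ctx -> list term -> ctx.

Fixpoint plug (C : ctx) (s : term) : term :=
  match C with
  | Hole => s
  | CFun f l C' r => Fun f (l ++ plug C' s :: r)
  end.

(* finite multi-distributions represented as lists (multisets up to Permutation) *)
Definition mdist := list (R * term).

Definition is_mdist (mu : mdist) : Prop :=
  (forall p t, In (p, t) mu -> 0 < p <= 1) /\
  fold_right (fun pt acc => fst pt + acc) 0 mu = 1.

Definition scale (p : R) (mu : mdist) : mdist :=
  map (fun qt => (p * fst qt, snd qt)) mu.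

Record rule : Type := mkRule { lhs : term ; rhs : mdist }.

Definition wf_rule (rl : rule) : Prop :=
  (exists f ts, lhs rl = Fun f ts) /\
  is_mdist (rhs rl) /\
  (forall p r, In (p, r) (rhs rl) -> forall x, occurs x r -> occurs x (lhs rl)).

Definition PTRS (trs : list rule) : Prop := forall rl, In rl trs -> wf_rule rl.

Definition NF (trs : list rule) (t : term) : Prop :=
  ~ exists C rl s, In rl trs /\ t = plug C (subst s (lhs rl)).

Definition istep (trs : list rule) (t : term) (mu : mdist) : Prop :=
  exists C rl s, In rl trs /\
    t = plug C (subst s (lhs rl)) /\
    (forall u, proper_subterm u (subst s (lhs rl)) -> NF trs u) /\
    mu = map (fun pr => (fst pr, plug C (subst s (snd pr)))) (rhs rl).

Inductive ilift (trs : list rule) : mdist -> mdist -> Prop :=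
| ilift_nf t : NF trs t -> ilift trs [(1, t)] [(1, t)]
| ilift_step t mu : istep trs t mu -> ilift trs [(1, t)] mu
| ilift_comb (fam : list (R * mdist * mdist)) (mu nu : mdist) :
    (forall p m n, In (p, m, n) fam -> 0 < p /\ ilift trs m n) ->
    fold_right (fun x acc => fst (fst x) + acc) 0 fam = 1 ->
    Permutation mu (concat (map (fun x => scale (fst (fst x)) (snd (fst x))) fam)) ->
    Permutation nu (concat (map (fun x => scale (fst (fst x)) (snd x)) fam)) ->
    ilift trs mu nu.

Definition nf_mass (trs : list rule) (mu : mdist) : R :=
  fold_right (fun pt acc =>
    (if excluded_middle_informative (NF trs (snd pt)) then fst pt else 0) + acc) 0 mu.

End PTRS.

Arguments Hole {F V}.

(* Forget the normalisation of multi-distributions and work with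
   the "weighted step" relation [wstep]: every weighted term (p:t) of a list is
   independently rewritten by one innermost step or, if t is a normal form,
   kept.  Unlike the lifting [ilift], [wstep] is closed under concatenation,
   positive scaling and permutation, and it can be split along any
   decomposition of its source.  Along a [wstep]-chain the total mass is
   constant and the normal-form mass is nondecreasing and bounded, so the
   latter converges.
   Given a chain (mu_n) whose normal-form mass tends to l < mass(mu_0), write
   mu_0 = (p:t) :: rest and split the whole chain into a chain starting at
   [(p,t)] and one starting at [rest]; their limits add up to l.  Either the
   first limit is < p, and rescaling that chain by 1/p yields an [ilift]-chain
   from [(1,t)] with limit < 1, or the second limit is < mass(rest) and we
   recurse on the shorter list [rest].  The theorem is the case mass(mu_0) = 1. *)

From Stdlib Require Import Reals List Permutation Lra ClassicalEpsilon.
Import ListNotations.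
Open Scope R_scope.

Section Sums.
Context {A : Type}.

Definition sumR (f : A -> R) (l : list A) : R :=
  fold_right (fun x acc => f x + acc) 0 l.

Lemma sumR_cons f x l : sumR f (x :: l) = f x + sumR f l.
Proof. reflexivity. Qed.

Lemma sumR_app f a b : sumR f (a ++ b) = sumR f a + sumR f b.
Proof. induction a as [|x a IH]; simpl; [lra|]. rewrite IH; lra. Qed.

Lemma sumR_perm f a b : Permutation a b -> sumR f a = sumR f b.
Proof. intro H; induction H; simpl; lra. Qed.

Lemma sumR_ext f g l : (forall x, In x l -> f x = g x) -> sumR f l = sumR g l.
Proof.
  induction l as [|x l IH]; intros H; simpl; [reflexivity|].
  rewrite H by (left; reflexivity). rewrite IH by (intros; apply H; right; assumption).
  reflexivity.
Qed.

Lemma sumR_le f g l : (forall x, In x l -> f x <= g x) -> sumR f l <= sumR g l.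
Proof.
  induction l as [|x l IH]; intros H; simpl; [lra|].
  assert (f x <= g x) by (apply H; left; reflexivity).
  assert (sumR f l <= sumR g l) by (apply IH; intros; apply H; right; assumption).
  lra.
Qed.

End Sums.

Lemma sumR_concat_map {A B : Type} (f : A -> R) (k : B -> list A) (L : list B) :
  sumR f (concat (map k L)) = sumR (fun y => sumR f (k y)) L.
Proof. induction L as [|y L IH]; simpl; [reflexivity|]. rewrite sumR_app, IH; reflexivity. Qed.

Lemma sumR_map {A B : Type} (f : B -> R) (h : A -> B) (l : list A) :
  sumR f (map h l) = sumR (fun x => f (h x)) l.
Proof. induction l as [|x l IH]; simpl; congruence. Qed.

Lemma dependent_choice_nat {X : Type} (x0 : X) (Inv : nat -> X -> Prop)
    (Rel : X -> X -> Prop) :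
  Inv 0%nat x0 ->
  (forall n x, Inv n x -> exists y, Inv (S n) y /\ Rel x y) ->
  exists s : nat -> X, s 0%nat = x0 /\ forall n, Inv n (s n) /\ Rel (s n) (s (S n)).
Proof.
  intros H0 Hext.
  set (next n x := epsilon (inhabits x0) (fun y => Inv (S n) y /\ Rel x y)).
  assert (Hnext : forall n x, Inv n x -> Inv (S n) (next n x) /\ Rel x (next n x)).
  { intros n x Hx. apply (epsilon_spec (inhabits x0) (fun y => Inv (S n) y /\ Rel x y)).
    exact (Hext n x Hx). }
  set (s := nat_rect (fun _ => X) x0 next).
  assert (Hinv : forall n, Inv n (s n)).
  { induction n as [|n IH]; [exact H0| exact (proj1 (Hnext n _ IH))]. }
  exists s; split; [reflexivity|]. intro n; split; [apply Hinv|].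
  exact (proj2 (Hnext n _ (Hinv n))).
Qed.

Lemma Un_cv_const c : Un_cv (fun _ => c) c.
Proof. intros e He; exists 0%nat; intros; unfold Rdist; rewrite Rminus_diag, Rabs_R0; lra. Qed.

Lemma Un_cv_ext u v l : (forall n, u n = v n) -> Un_cv u l -> Un_cv v l.
Proof. intros E H e He. destruct (H e He) as [N HN]. exists N; intros n Hn. rewrite <- E; auto. Qed.

Section WeightedSteps.
Variables F V : Type.
Variable trs : list (rule F V).
Notation term := (term F V).
Notation mdist := (mdist F V).

Definition mass (pt : R * term) : R := fst pt.
Definition nf_weight (pt : R * term) : R :=
  if excluded_middle_informative (NF trs (snd pt)) then fst pt else 0.

Lemma nf_mass_sumR mu : nf_mass trs mu = sumR nf_weight mu.
Proof. reflexivity. Qed.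

Lemma nf_weight_bounds pt : 0 <= fst pt -> 0 <= nf_weight pt <= mass pt.
Proof. unfold nf_weight, mass; destruct excluded_middle_informative; lra. Qed.

Lemma scale_scale c p (l : mdist) : scale c (scale p l) = scale (c * p) l.
Proof. unfold scale; rewrite map_map; apply map_ext; intros [q u]; simpl; f_equal; ring. Qed.

Lemma scale_concat c (L : list mdist) : scale c (concat L) = concat (map (scale c) L).
Proof. unfold scale; rewrite concat_map; reflexivity. Qed.

Lemma scale_1 (l : mdist) : scale 1 l = l.
Proof. unfold scale; rewrite <- (map_id l) at 2. apply map_ext; intros [q u]; simpl; f_equal; ring. Qed.

Lemma sumR_scale_mass c (l : mdist) : sumR mass (scale c l) = c * sumR mass l.
Proof. induction l as [|[p t] l IH]; simpl; [lra|]. rewrite IH; unfold mass; simpl; lra. Qed.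

Lemma sumR_scale_nf c (l : mdist) : sumR nf_weight (scale c l) = c * sumR nf_weight l.
Proof.
  induction l as [|[p t] l IH]; simpl; [lra|]. rewrite IH.
  unfold nf_weight; simpl; destruct excluded_middle_informative; lra.
Qed.

Lemma nf_mass_bounds (l : mdist) : (forall q u, In (q, u) l -> 0 <= q) ->
  0 <= sumR nf_weight l <= sumR mass l.
Proof.
  induction l as [|[q u] l IH]; intros H; [unfold sumR; simpl; lra|].
  rewrite !sumR_cons.
  assert (Hw := nf_weight_bounds (q, u) (H q u (or_introl eq_refl))).
  assert (IH' := IH (fun q' u' Hin => H q' u' (or_intror Hin))). lra.
Qed.

Definition basic_step (t : term) (nu : mdist) : Prop :=
  (NF trs t /\ nu = [(1, t)]) \/ istep trs t nu.

Definition wsource (x : R * term * mdist) : R * term := (fst (fst x), snd (fst x)).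
Definition wtarget (x : R * term * mdist) : list (R * term) := scale (fst (fst x)) (snd x).

Definition wstep (mu nu : mdist) : Prop := exists L : list (R * term * mdist),
  (forall p t n, In (p, t, n) L -> 0 < p /\ basic_step t n) /\
  Permutation mu (map wsource L) /\
  Permutation nu (concat (map wtarget L)).

Lemma wstep_perm a a' b b' :
  Permutation a a' -> Permutation b b' -> wstep a b -> wstep a' b'.
Proof.
  intros Ha Hb [L [HL [HaL HbL]]]. exists L; split; [exact HL|].
  split; [apply (Permutation_trans (Permutation_sym Ha) HaL)
        | apply (Permutation_trans (Permutation_sym Hb) HbL)].
Qed.

Lemma wstep_nil : wstep [] [].
Proof. exists []; simpl; repeat split; auto; intros; contradiction. Qed.

Lemma wstep_app a b c d : wstep a b -> wstep c d -> wstep (a ++ c) (b ++ d).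
Proof.
  intros [L1 [H1 [Ha Hb]]] [L2 [H2 [Hc Hd]]]. exists (L1 ++ L2); split; [|split].
  - intros p t n Hin; apply in_app_or in Hin as [Hin|Hin]; eauto.
  - rewrite map_app; apply Permutation_app; assumption.
  - rewrite map_app, concat_app; apply Permutation_app; assumption.
Qed.

Lemma wstep_scale c a b : 0 < c -> wstep a b -> wstep (scale c a) (scale c b).
Proof.
  intros Hc [L [HL [Ha Hb]]].
  exists (map (fun x => (c * fst (fst x), snd (fst x), snd x)) L); split; [|split].
  - intros p t n Hin. apply in_map_iff in Hin as [[[q u] m] [E Hin]].
    injection E as <- <- <-. destruct (HL _ _ _ Hin) as [Hq Hbase].
    split; [apply Rmult_lt_0_compat|]; assumption.
  - apply Permutation_trans with (scale c (map wsource L)); [apply Permutation_map; assumption|].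
    unfold scale, wsource; rewrite !map_map. apply Permutation_refl'; reflexivity.
  - apply Permutation_trans with (scale c (concat (map wtarget L))); [apply Permutation_map; assumption|].
    rewrite scale_concat, !map_map. apply Permutation_refl'. f_equal.
    apply map_ext; intro x. apply scale_scale.
Qed.

Lemma wstep_split a b nu : wstep (a ++ b) nu ->
  exists nu1 nu2, wstep a nu1 /\ wstep b nu2 /\ Permutation nu (nu1 ++ nu2).
Proof.
  intros [L [HL [Hab Hnu]]].
  destruct (Permutation_map_inv _ _ Hab) as [L' [E HLL']].
  destruct (map_eq_app _ _ _ _ (eq_sym E)) as [l1 [l2 [-> [<- <-]]]].
  assert (Hsub : forall p t n, In (p, t, n) (l1 ++ l2) -> 0 < p /\ basic_step t n).
  { intros p t n Hin. apply HL, (Permutation_in _ (Permutation_sym HLL')), Hin. }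
  exists (concat (map wtarget l1)), (concat (map wtarget l2)); split; [|split].
  - exists l1; split; [|split; apply Permutation_refl].
    intros p t n Hin; apply Hsub, in_or_app; left; assumption.
  - exists l2; split; [|split; apply Permutation_refl].
    intros p t n Hin; apply Hsub, in_or_app; right; assumption.
  - eapply Permutation_trans; [exact Hnu|]. rewrite <- concat_app, <- map_app.
    rewrite <- !flat_map_concat_map. apply Permutation_flat_map; assumption.
Qed.

Lemma wstep_combine (fam : list (R * mdist * mdist)) :
  (forall p m n, In (p, m, n) fam -> 0 < p /\ wstep m n) ->
  wstep (concat (map (fun x => scale (fst (fst x)) (snd (fst x))) fam))
        (concat (map (fun x => scale (fst (fst x)) (snd x)) fam)).
Proof.
  induction fam as [|[[p m] n] fam IH]; intros H; simpl; [apply wstep_nil|].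
  destruct (H p m n (or_introl eq_refl)) as [Hp Hmn].
  apply wstep_app; [apply wstep_scale; assumption|].
  apply IH; intros; apply H; right; assumption.
Qed.

Lemma ilift_wstep : forall mu nu, ilift trs mu nu -> wstep mu nu.
Proof.
  fix IH 3. intros mu nu H. destruct H as [t Ht | t mu Ht | fam mu nu Hf Hs Hp1 Hp2].
  - exists [(1, t, [(1, t)])]; simpl; split; [|split].
    + intros q u n [E|[]]; injection E as <- <- <-; split; [lra| left; auto].
    + apply Permutation_refl.
    + unfold wtarget, scale; simpl. rewrite Rmult_1_r; apply Permutation_refl.
  - exists [(1, t, mu)]; simpl; split; [|split].
    + intros q u n [E|[]]; injection E as <- <- <-; split; [lra| right; auto].
    + apply Permutation_refl.
    + unfold wtarget; simpl. rewrite app_nil_r, scale_1; apply Permutation_refl.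
  - eapply wstep_perm; [apply Permutation_sym, Hp1 | apply Permutation_sym, Hp2 |].
    apply wstep_combine. intros p m n Hin.
    destruct (Hf p m n Hin) as [Hp Hl]. exact (conj Hp (IH _ _ Hl)).
Qed.

Lemma ilift_mass : forall mu nu, ilift trs mu nu -> sumR mass mu = 1.
Proof.
  fix IH 3. intros mu nu H. destruct H as [t Ht | t mu Ht | fam mu nu Hf Hs Hp1 Hp2].
  - unfold sumR, mass; simpl; lra.
  - unfold sumR, mass; simpl; lra.
  - rewrite (sumR_perm _ _ _ Hp1), <- Hs. etransitivity; [apply sumR_concat_map|].
    apply sumR_ext. intros [[p m] n] Hin; simpl.
    destruct (Hf p m n Hin) as [_ Hl]. rewrite sumR_scale_mass, (IH _ _ Hl); ring.
Qed.

Lemma wstep_ilift mu nu : wstep mu nu -> sumR mass mu = 1 -> ilift trs mu nu.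
Proof.
  intros [L [HL [Ha Hb]]] Hm.
  apply (ilift_comb (map (fun x => (fst (fst x), [(1, snd (fst x))], snd x)) L)).
  - intros p m n Hin. apply in_map_iff in Hin as [[[q t] k] [E Hin]].
    injection E as <- <- <-. destruct (HL _ _ _ Hin) as [Hq [[HN ->]|Hi]]; split; auto.
    + apply ilift_nf; assumption.
    + apply ilift_step; assumption.
  - transitivity (sumR mass mu); [|exact Hm]. rewrite (sumR_perm _ _ _ Ha), sumR_map. clear.
    induction L as [|x L IH]; simpl; [reflexivity| rewrite IH; reflexivity].
  - eapply Permutation_trans; [exact Ha|]. apply Permutation_refl'. clear.
    induction L as [|[[p t] n] L IH]; simpl; [reflexivity|].
    unfold scale; simpl. rewrite Rmult_1_r. f_equal. exact IH.
  - rewrite map_map. exact Hb.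
Qed.

Lemma istep_not_NF t n : istep trs t n -> ~ NF trs t.
Proof. intros [C [rl [s [Hin [E _]]]]] HN. apply HN. exists C, rl, s; auto. Qed.

Lemma wstep_source_pos mu nu : wstep mu nu -> forall q u, In (q, u) mu -> 0 < q.
Proof.
  intros [L [HL [Ha _]]] q u Hin. apply (Permutation_in _ Ha), in_map_iff in Hin.
  destruct Hin as [[[p t] n] [E Hin]]. injection E as <- <-. exact (proj1 (HL _ _ _ Hin)).
Qed.

Section WithPTRS.
Hypothesis Htrs : PTRS trs.

Lemma basic_step_pos t n : basic_step t n -> forall q u, In (q, u) n -> 0 < q.
Proof.
  intros [[_ ->]|[C [rl [s [Hin [_ [_ ->]]]]]]] q u Hq.
  - destruct Hq as [E|[]]. injection E as <- <-; lra.
  - apply in_map_iff in Hq as [[r v] [E Hq]]. injection E as <- _.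
    destruct (Htrs rl Hin) as [_ [[Hpos _] _]]. exact (proj1 (Hpos r v Hq)).
Qed.

Lemma basic_step_mass t n : basic_step t n -> sumR mass n = 1.
Proof.
  intros [[_ ->]|[C [rl [s [Hin [_ [_ ->]]]]]]].
  - unfold sumR, mass; simpl; lra.
  - destruct (Htrs rl Hin) as [_ [[_ Hsum] _]]. rewrite sumR_map. exact Hsum.
Qed.

Lemma wstep_mass mu nu : wstep mu nu -> sumR mass nu = sumR mass mu.
Proof.
  intros [L [HL [Ha Hb]]]. rewrite (sumR_perm _ _ _ Ha), (sumR_perm _ _ _ Hb).
  rewrite sumR_map, sumR_concat_map. apply sumR_ext. intros [[p t] n] Hin.
  unfold wtarget, wsource, mass; simpl. rewrite sumR_scale_mass.
  rewrite (basic_step_mass t n (proj2 (HL _ _ _ Hin))). ring.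
Qed.

(* The normal-form mass cannot decrease: normal forms are kept unchanged. *)
Lemma wstep_nf_mono mu nu : wstep mu nu -> sumR nf_weight mu <= sumR nf_weight nu.
Proof.
  intros [L [HL [Ha Hb]]]. rewrite (sumR_perm _ _ _ Ha), (sumR_perm _ _ _ Hb).
  rewrite sumR_map, sumR_concat_map. apply sumR_le. intros [[p t] n] Hin.
  unfold wtarget, wsource; simpl. rewrite sumR_scale_nf.
  destruct (HL _ _ _ Hin) as [Hp Hbase].
  unfold nf_weight at 1; simpl. destruct excluded_middle_informative as [HN|HN].
  - destruct Hbase as [[_ ->]|Hi]; [|exfalso; exact (istep_not_NF _ _ Hi HN)].
    unfold sumR, nf_weight; simpl. destruct excluded_middle_informative; [lra|contradiction].
  - assert (Hn := nf_mass_bounds n (fun q u Hq => Rlt_le _ _ (basic_step_pos t n Hbase q u Hq))).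
    apply Rmult_le_pos; lra.
Qed.

Definition wchain (s : nat -> mdist) : Prop := forall n, wstep (s n) (s (S n)).

Lemma wchain_mass s : wchain s -> forall n, sumR mass (s n) = sumR mass (s 0%nat).
Proof. intros Hs n; induction n as [|n IH]; [reflexivity|]. rewrite (wstep_mass _ _ (Hs n)); exact IH. Qed.

Lemma wchain_nf_bounds s : wchain s -> forall n,
  0 <= sumR nf_weight (s n) <= sumR mass (s 0%nat).
Proof.
  intros Hs n. rewrite <- (wchain_mass s Hs n). apply nf_mass_bounds.
  intros q u Hq; apply Rlt_le, (wstep_source_pos _ _ (Hs n) q u Hq).
Qed.

Lemma wchain_nf_converges s : wchain s -> exists L, Un_cv (fun n => sumR nf_weight (s n)) L.
Proof.
  intros Hs. apply Un_cv_crit.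
  - intro n; apply wstep_nf_mono, Hs.
  - exists (sumR mass (s 0%nat)). intros x [n ->]. apply (wchain_nf_bounds s Hs n).
Qed.

Lemma wchain_nf_limit_nonneg s l :
  wchain s -> Un_cv (fun n => sumR nf_weight (s n)) l -> 0 <= l.
Proof.
  intros Hs Hl.
  apply (@Rle_cv_lim (fun _ => 0) (fun n => sumR nf_weight (s n))); [|apply Un_cv_const| exact Hl].
  intro n; apply (wchain_nf_bounds s Hs n).
Qed.

Lemma wchain_split mu A B : wchain mu -> mu 0%nat = A ++ B ->
  exists a b, a 0%nat = A /\ b 0%nat = B /\ wchain a /\ wchain b /\
    forall n, Permutation (mu n) (a n ++ b n).
Proof.
  intros Hmu H0.
  destruct (dependent_choice_nat (A, B)
              (fun n x => Permutation (mu n) (fst x ++ snd x))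
              (fun x y => wstep (fst x) (fst y) /\ wstep (snd x) (snd y)))
    as [ab [Hab0 Hab]].
  - rewrite H0; apply Permutation_refl.
  - intros n [a b] Hn. simpl in Hn.
    assert (Hst : wstep (a ++ b) (mu (S n)))
      by exact (wstep_perm _ _ _ _ Hn (Permutation_refl _) (Hmu n)).
    destruct (wstep_split _ _ _ Hst) as [a' [b' [Ha [Hb Hperm]]]].
    exists (a', b'); simpl; auto.
  - exists (fun n => fst (ab n)), (fun n => snd (ab n)).
    rewrite Hab0; repeat split; intro n; apply Hab.
Qed.

Lemma wchain_split_limits mu A B l : wchain mu -> mu 0%nat = A ++ B ->
  Un_cv (fun n => sumR nf_weight (mu n)) l ->
  exists a b La Lb, a 0%nat = A /\ b 0%nat = B /\ wchain a /\ wchain b /\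
    Un_cv (fun n => sumR nf_weight (a n)) La /\
    Un_cv (fun n => sumR nf_weight (b n)) Lb /\ l = La + Lb.
Proof.
  intros Hmu H0 Hl.
  destruct (wchain_split mu A B Hmu H0) as [a [b [Ha0 [Hb0 [Ha [Hb Hperm]]]]]].
  destruct (wchain_nf_converges a Ha) as [La HLa].
  destruct (wchain_nf_converges b Hb) as [Lb HLb].
  exists a, b, La, Lb; repeat split; try assumption.
  apply (UL_sequence _ _ _ Hl).
  apply (Un_cv_ext (fun n => sumR nf_weight (a n) + sumR nf_weight (b n))).
  - intro n. rewrite (sumR_perm _ _ _ (Hperm n)), sumR_app. reflexivity.
  - exact (CV_plus _ _ _ _ HLa HLb).
Qed.

Definition nonAST_from_term : Prop :=
  exists (mu' : nat -> mdist) (t : term),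
    (forall n, ilift trs (mu' n) (mu' (S n))) /\
    mu' 0%nat = [(1, t)] /\
    exists l, Un_cv (fun n => nf_mass trs (mu' n)) l /\ l < 1.

Lemma rescale_chain a p t La : 0 < p -> wchain a -> a 0%nat = [(p, t)] ->
  Un_cv (fun n => sumR nf_weight (a n)) La -> La < p -> nonAST_from_term.
Proof.
  intros Hp Ha Ha0 HLa HLp.
  assert (Hinv : 0 < / p) by (apply Rinv_0_lt_compat; exact Hp).
  exists (fun n => scale (/ p) (a n)), t; split; [|split].
  - intro n. apply wstep_ilift; [apply wstep_scale; [exact Hinv| apply Ha]|].
    rewrite sumR_scale_mass, (wchain_mass a Ha n), Ha0.
    unfold sumR, mass; simpl. field. lra.
  - simpl. rewrite Ha0. unfold scale; simpl. rewrite Rinv_l by lra. reflexivity.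
  - exists (/ p * La). split.
    + apply (Un_cv_ext (fun n => / p * sumR nf_weight (a n))).
      * intro n. rewrite nf_mass_sumR, sumR_scale_nf. reflexivity.
      * exact (CV_mult _ _ _ _ (Un_cv_const (/ p)) HLa).
    + apply (Rmult_lt_reg_l p); [exact Hp|]. rewrite <- Rmult_assoc, Rinv_r by lra. lra.
Qed.

Lemma nonAST_of_deficient_chain : forall mu0 mu l, mu 0%nat = mu0 -> wchain mu ->
  Un_cv (fun n => sumR nf_weight (mu n)) l -> l < sumR mass mu0 -> nonAST_from_term.
Proof.
  induction mu0 as [|[p t] rest IH]; intros mu l H0 Hmu Hl Hlt.
  - exfalso. assert (Hnonneg := wchain_nf_limit_nonneg mu l Hmu Hl).
    unfold sumR in Hlt; simpl in Hlt; lra.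
  - assert (Hp : 0 < p).
    { apply (wstep_source_pos _ _ (Hmu 0%nat) p t). rewrite H0; left; reflexivity. }
    destruct (wchain_split_limits mu [(p, t)] rest l Hmu H0 Hl)
      as [a [b [La [Lb [Ha0 [Hb0 [Ha [Hb [HLa [HLb ->]]]]]]]]]].
    rewrite sumR_cons in Hlt. unfold mass at 1 in Hlt; simpl in Hlt.
    destruct (Rlt_or_le La p) as [HLp|HLp].
    + exact (rescale_chain a p t La Hp Ha Ha0 HLa HLp).
    + apply (IH b Lb Hb0 Hb HLb). lra.
Qed.

End WithPTRS.

End WeightedSteps.

Theorem mainTheorem11 (F V : Type) (trs : list (rule F V)) :
  PTRS trs ->
  (exists mu : nat -> mdist F V,
      (forall n, ilift trs (mu n) (mu (S n))) /\
      exists l, Un_cv (fun n => nf_mass trs (mu n)) l /\ l < 1) ->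
  exists (mu' : nat -> mdist F V) (t : term F V),
    (forall n, ilift trs (mu' n) (mu' (S n))) /\
    mu' 0%nat = [(1, t)] /\
    exists l, Un_cv (fun n => nf_mass trs (mu' n)) l /\ l < 1.
Proof.
  intros Htrs [mu [Hchain [l [Hl Hl1]]]].
  apply (nonAST_of_deficient_chain F V trs Htrs (mu 0%nat) mu l eq_refl).
  - intro n; apply ilift_wstep, Hchain.
  - exact Hl.
  - rewrite (ilift_mass F V trs _ _ (Hchain 0%nat)). exact Hl1.
Qed.
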